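(* For every finite set of ground terms $\Gamma$ and ground term $M$, the judgment $\Gamma\vdash M$ is derivable in the natural deduction system $\mathcal N$ if and only if the sequent $\downarrow\Gamma\vdash\downarrow M$ is derivable in the sequent system $\mathcal S$.
   Context: Fix countably infinite sets of names and variables and the constructors $\mathsf{pub}$ (unary) and $\mathsf{sign},\mathsf{blind},\langle\cdot,\cdot\rangle,\{\cdot\}_{\cdot}$ (binary). Let $E$ be an equational theory whose signature $\Sigma_E$ is disjoint from the constructors, containing at most one associative-commutative (AC) binary symbol $\oplus$, and presented by a rewrite system $R_E$ that is terminating and confluent modulo AC of $\oplus$. Terms: names, variables, $\mathsf{pub}(M)$, $\mathsf{sign}(M,N)$, $\mathsf{blind}(M,N)$, $\langle M,N\rangle$, $\{M\}_N$, $g(M_1,\dots,M_j)$ with $g\in\Sigma_E$. $\equiv$ is equality modulo AC of $\oplus$, $\approx_E$ equality modulo $E$, $\downarrow M$ the $R_E$-normal form of $M$ modulo AC, $\downarrow\Gamma=\{\downarrow N\mid N\in\Gamma\}$. A term is guarded if it is a name, a variable, or headed by a constructor. An $E$-context is a term with holes built only from function symbols of $\Sigma_E$. $\Gamma,M$ means $\Gamma\cup\{M\}$. System $\mathcal N$ (judgments $\Gamma\vdash M$): ($id$) $\Gamma\vdash M$ if $M\in\Gamma$; ($e_E$) from $\Gamma\vdash\{M\}_K$, $\Gamma\vdash K$ infer $\Gamma\vdash M$; ($e_I$) from $\Gamma\vdash M$, $\Gamma\vdash K$ infer $\Gamma\vdash\{M\}_K$; ($p_E$) from $\Gamma\vdash\langle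 M,N\rangle$ infer $\Gamma\vdash M$, and also infer $\Gamma\vdash N$; ($p_I$) from $\Gamma\vdash M$, $\Gamma\vdash N$ infer $\Gamma\vdash\langle M,N\rangle$; ($\mathsf{sign}_E$) from $\Gamma\vdash\mathsf{sign}(M,K)$, $\Gamma\vdash\mathsf{pub}(K)$ infer $\Gamma\vdash M$; ($\mathsf{sign}_I$) from $\Gamma\vdash M$, $\Gamma\vdash K$ infer $\Gamma\vdash\mathsf{sign}(M,K)$; ($\mathsf{blind}_{E1}$) from $\Gamma\vdash\mathsf{blind}(M,K)$, $\Gamma\vdash K$ infer $\Gamma\vdash M$; ($\mathsf{blind}_I$) from $\Gamma\vdash M$, $\Gamma\vdash K$ infer $\Gamma\vdash\mathsf{blind}(M,K)$; ($\mathsf{blind}_{E2}$) from $\Gamma\vdash\mathsf{sign}(\mathsf{blind}(M,R),K)$, $\Gamma\vdash R$ infer $\Gamma\vdash\mathsf{sign}(M,K)$; ($g_I$, $g\in\Sigma_E$) from $\Gamma\vdash M_1,\dots,\Gamma\vdash M_j$ infer $\Gamma\vdash g(M_1,\dots,M_j)$; ($\approx$) from $\Gamma\vdash N$ infer $\Gamma\vdash M$ if $M\approx_E N$. System $\mathcal S$ (sequents all of whose terms are in normal form): (id) $\Gamma\vdash M$ with no premise if $M\approx_E C[M_1,\dots,M_k]$ for some $E$-context $C$ and $M_i\in\Gamma$; (cut) from $\Gamma\vdash M$, $\Gamma,M\vdash T$ infer $\Gamma\vdash T$; ($p_L$) from $\Gamma,\langle M,N\rangle,M,N\vdash T$ infer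 $\Gamma,\langle M,N\rangle\vdash T$; ($p_R$) from $\Gamma\vdash M$, $\Gamma\vdash N$ infer $\Gamma\vdash\langle M,N\rangle$; ($e_L$) from $\Gamma,\{M\}_K\vdash K$ and $\Gamma,\{M\}_K,M,K\vdash N$ infer $\Gamma,\{M\}_K\vdash N$; ($e_R$) from $\Gamma\vdash M$, $\Gamma\vdash K$ infer $\Gamma\vdash\{M\}_K$; ($\mathsf{sign}_L$) from $\Gamma,\mathsf{sign}(M,K),\mathsf{pub}(L),M\vdash N$ infer $\Gamma,\mathsf{sign}(M,K),\mathsf{pub}(L)\vdash N$ provided $K\equiv L$; ($\mathsf{sign}_R$) from $\Gamma\vdash M$, $\Gamma\vdash K$ infer $\Gamma\vdash\mathsf{sign}(M,K)$; ($\mathsf{blind}_{L1}$) from $\Gamma,\mathsf{blind}(M,K)\vdash K$ and $\Gamma,\mathsf{blind}(M,K),M,K\vdash N$ infer $\Gamma,\mathsf{blind}(M,K)\vdash N$; ($\mathsf{blind}_R$) from $\Gamma\vdash M$, $\Gamma\vdash K$ infer $\Gamma\vdash\mathsf{blind}(M,K)$; ($\mathsf{blind}_{L2}$) from $\Gamma,\mathsf{sign}(\mathsf{blind}(M,R),K)\vdash R$ and $\Gamma,\mathsf{sign}(\mathsf{blind}(M,R),K),\mathsf{sign}(M,K),R\vdash N$ infer $\Gamma,\mathsf{sign}(\mathsf{blind}(M,R),K)\vdash N$; ($gs$) from $\Gamma\vdash A$, $\Gamma,A\vdash M$ infer $\Gamma\vdash M$, provided $A$ is a guarded subterm of a term in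 $\Gamma\cup\{M\}$. *)

From Stdlib Require Import List Relations.
Import ListNotations.
Set Implicit Arguments.

Section Terms.

(* Sigma_E: a type of function symbols with arities; disjoint from the
   constructors by construction of [term]. *)
Variable F : Type.
Variable arity : F -> nat.
(* the (at most one) AC symbol *)
Variable oplus : option F.

Inductive term : Type :=
| Name  : nat -> term
| Var   : nat -> term
| Pub   : term -> term
| Sign  : term -> term -> term
| Blind : term -> term -> term
| Pair  : term -> term -> term
| Enc   : term -> term -> term
| Fn    : F -> list term -> term.

Fixpoint wf (t : term) : Prop :=
  match t with
  | Name _ | Var _ => True
  | Pub a => wf a
  | Sign a b | Blind a b | Pair a b | Enc a b => wf a /\ wf b
  | Fn f args =>
      length args = arity f /\
      (fix go (l : list term) : Prop :=
         match l with [] => True | a :: l' => wf a /\ go l' end) args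
  end.

Fixpoint ground (t : term) : Prop :=
  match t with
  | Name _ => True
  | Var _ => False
  | Pub a => ground a
  | Sign a b | Blind a b | Pair a b | Enc a b => ground a /\ ground b
  | Fn f args =>
      (fix go (l : list term) : Prop :=
         match l with [] => True | a :: l' => ground a /\ go l' end) args
  end.

Definition gterm (t : term) : Prop := wf t /\ ground t.

Fixpoint Eterm (t : term) : Prop :=
  match t with
  | Var _ => True
  | Fn f args =>
      (fix go (l : list term) : Prop :=
         match l with [] => True | a :: l' => Eterm a /\ go l' end) args
  | _ => False
  end.

Fixpoint subst (s : nat -> term) (t : term) : term :=
  match t with
  | Name n => Name n
  | Var n => s n
  | Pub a => Pub (subst s a)
  | Sign a b => Sign (subst s a) (subst s b)
  | Blind a b => Blind (subst s a) (subst s b)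
  | Pair a b => Pair (subst s a) (subst s b)
  | Enc a b => Enc (subst s a) (subst s b)
  | Fn f args => Fn f (map (subst s) args)
  end.

Inductive isub : term -> term -> Prop :=
| isub_pub a : isub a (Pub a)
| isub_sign1 a b : isub a (Sign a b)
| isub_sign2 a b : isub b (Sign a b)
| isub_blind1 a b : isub a (Blind a b)
| isub_blind2 a b : isub b (Blind a b)
| isub_pair1 a b : isub a (Pair a b)
| isub_pair2 a b : isub b (Pair a b)
| isub_enc1 a b : isub a (Enc a b)
| isub_enc2 a b : isub b (Enc a b)
| isub_fn f a args : In a args -> isub a (Fn f args).

Definition subterm : relation term := clos_refl_trans term isub.

Definition occurs_var (n : nat) (t : term) : Prop := subterm (Var n) t.

Definition guarded (t : term) : Prop :=
  match t with Fn _ _ => False | _ => True end.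

Inductive ctx_clos (R : relation term) : relation term :=
| cc_base a b : R a b -> ctx_clos R a b
| cc_pub a b : ctx_clos R a b -> ctx_clos R (Pub a) (Pub b)
| cc_sign1 a b c : ctx_clos R a b -> ctx_clos R (Sign a c) (Sign b c)
| cc_sign2 a b c : ctx_clos R a b -> ctx_clos R (Sign c a) (Sign c b)
| cc_blind1 a b c : ctx_clos R a b -> ctx_clos R (Blind a c) (Blind b c)
| cc_blind2 a b c : ctx_clos R a b -> ctx_clos R (Blind c a) (Blind c b)
| cc_pair1 a b c : ctx_clos R a b -> ctx_clos R (Pair a c) (Pair b c)
| cc_pair2 a b c : ctx_clos R a b -> ctx_clos R (Pair c a) (Pair c b)
| cc_enc1 a b c : ctx_clos R a b -> ctx_clos R (Enc a c) (Enc b c)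
| cc_enc2 a b c : ctx_clos R a b -> ctx_clos R (Enc c a) (Enc c b)
| cc_fn f l1 l2 a b : ctx_clos R a b ->
    ctx_clos R (Fn f (l1 ++ a :: l2)) (Fn f (l1 ++ b :: l2)).

Inductive ac_axiom : relation term :=
| ac_assoc o a b c : oplus = Some o ->
    ac_axiom (Fn o [Fn o [a; b]; c]) (Fn o [a; Fn o [b; c]])
| ac_comm o a b : oplus = Some o -> ac_axiom (Fn o [a; b]) (Fn o [b; a]).

Definition ac_eq : relation term := clos_refl_sym_trans term (ctx_clos ac_axiom).

Variable R : list (term * term).

Definition rule_inst (t u : term) : Prop :=
  exists l r s, In (l, r) R /\ t = subst s l /\ u = subst s r.

Definition rstep : relation term := ctx_clos rule_inst.

Definition rstepAC (t u : term) : Prop :=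
  exists t' u', ac_eq t t' /\ rstep t' u' /\ ac_eq u' u.

Definition E_eq : relation term :=
  clos_refl_sym_trans term (union term rstep (ctx_clos ac_axiom)).

Definition irreducible (t : term) : Prop := forall u, ~ rstepAC t u.

Definition is_nf_of (t n : term) : Prop :=
  clos_refl_trans term rstepAC t n /\ irreducible n.

Record presentation : Prop := {
  oplus_binary : forall o, oplus = Some o -> arity o = 2;
  rules_over_SigmaE : forall l r, In (l, r) R ->
      Eterm l /\ Eterm r /\ wf l /\ wf r;
  rules_lhs_not_var : forall l r, In (l, r) R -> forall n, l <> Var n;
  rules_vars : forall l r, In (l, r) R ->
      forall n, occurs_var n r -> occurs_var n l;
  R_terminating : well_founded (fun u t => rstepAC t u);
  R_confluent_modAC : forall t u1 u2,
      clos_refl_trans term rstepAC t u1 -> clos_refl_trans term rstepAC t u2 ->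
      exists v1 v2, clos_refl_trans term rstepAC u1 v1 /\
                    clos_refl_trans term rstepAC u2 v2 /\ ac_eq v1 v2
}.

Inductive ND (G : list term) : term -> Prop :=
| N_id M : In M G -> ND G M
| N_eE M K : ND G (Enc M K) -> ND G K -> ND G M
| N_eI M K : ND G M -> ND G K -> ND G (Enc M K)
| N_pE1 M N : ND G (Pair M N) -> ND G M
| N_pE2 M N : ND G (Pair M N) -> ND G N
| N_pI M N : ND G M -> ND G N -> ND G (Pair M N)
| N_signE M K : ND G (Sign M K) -> ND G (Pub K) -> ND G M
| N_signI M K : ND G M -> ND G K -> ND G (Sign M K)
| N_blindE1 M K : ND G (Blind M K) -> ND G K -> ND G M
| N_blindI M K : ND G M -> ND G K -> ND G (Blind M K)
| N_blindE2 M Rr K : ND G (Sign (Blind M Rr) K) -> ND G Rr -> ND G (Sign M K)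
| N_gI f args : length args = arity f -> Forall (ND G) args -> ND G (Fn f args)
| N_approx M N : ND G N -> E_eq M N -> gterm M -> ND G M.

Definition valid_seq (G : list term) (T : term) : Prop :=
  forall t, In t (T :: G) -> gterm t /\ irreducible t.

(* C[M1,...,Mk] with C an E-context (only Sigma_E symbols) and Mi in G *)
Inductive ectx (G : list term) : term -> Prop :=
| ectx_hole M : In M G -> ectx G M
| ectx_fn f args : length args = arity f -> Forall (ectx G) args ->
    ectx G (Fn f args).

Inductive SC : list term -> term -> Prop :=
| S_id G M C : valid_seq G M -> ectx G C -> E_eq M C -> SC G M
| S_cut G M T : valid_seq G T -> SC G M -> SC (M :: G) T -> SC G T
| S_pL G M N T : valid_seq G T -> In (Pair M N) G ->
    SC (M :: N :: G) T -> SC G T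
| S_pR G M N : valid_seq G (Pair M N) -> SC G M -> SC G N -> SC G (Pair M N)
| S_eL G M K N : valid_seq G N -> In (Enc M K) G ->
    SC G K -> SC (M :: K :: G) N -> SC G N
| S_eR G M K : valid_seq G (Enc M K) -> SC G M -> SC G K -> SC G (Enc M K)
| S_signL G M K L N : valid_seq G N -> In (Sign M K) G -> In (Pub L) G ->
    ac_eq K L -> SC (M :: G) N -> SC G N
| S_signR G M K : valid_seq G (Sign M K) -> SC G M -> SC G K -> SC G (Sign M K)
| S_blindL1 G M K N : valid_seq G N -> In (Blind M K) G ->
    SC G K -> SC (M :: K :: G) N -> SC G N
| S_blindR G M K : valid_seq G (Blind M K) -> SC G M -> SC G K ->
    SC G (Blind M K)
| S_blindL2 G M Rr K N : valid_seq G N -> In (Sign (Blind M Rr) K) G ->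
    SC G Rr -> SC (Sign M K :: Rr :: G) N -> SC G N
| S_gs G A M : valid_seq G M ->
    (exists t, In t (M :: G) /\ subterm A t) -> guarded A ->
    SC G A -> SC (A :: G) M -> SC G M.

End Terms.

(* Soundness: every rule of S is derivable in N (a left rule is an elimination
   applied to a hypothesis, (id) is a tower of g_I rules followed by (≈)), and N
   is closed under cut; since each element of ↓Γ is derivable from Γ by (≈), an
   S-derivation of ↓Γ ⊢ ↓M yields an N-derivation of Γ ⊢ M.

   Completeness: by induction on the N-derivation of Γ ⊢ M, every ground normal
   term T ≈_E M is S-derivable from ↓Γ. The rewrite rules and the AC axioms only
   act at Σ_E-headed positions, so by confluence modulo AC a normal term E-equal
   to a constructor-headed term has the same head and E-equal arguments, and two
   E-equal normal terms are AC-equal. An introduction rule thus becomes the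
   corresponding right rule, an elimination becomes a cut on the normal form of
   its major premise followed by the corresponding left rule, and g_I becomes cuts
   on the normal forms of the arguments closed by (id). Weakening is admissible in
   S, which lets induction hypotheses be reused under the contexts extended by
   left rules. *)

From Pilot Require Import Defs.
From Stdlib Require Import List Relations.
Import ListNotations.
Set Implicit Arguments. Unset Strict Implicit.

Section Systems.
Variable F : Type.
Variable arity : F -> nat.
Variable oplus : option F.
Variable R : list (term F * term F).
Hypothesis HE : presentation arity oplus R.

Notation term := (term F).
Notation gterm := (gterm arity).
Notation ac_eq := (ac_eq oplus).
Notation E_eq := (E_eq oplus R).
Notation rstepAC := (rstepAC oplus R).
Notation irreducible := (irreducible oplus R).
Notation rt := (clos_refl_trans term rstepAC).
Implicit Types (a b c t u v T : term) (s : nat -> term).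

Lemma term_ind_nested (P : term -> Prop)
  (hN : forall n, P (Name F n)) (hV : forall n, P (Var F n))
  (hP : forall a, P a -> P (Pub a))
  (hS : forall a b, P a -> P b -> P (Sign a b))
  (hB : forall a b, P a -> P b -> P (Blind a b))
  (hPa : forall a b, P a -> P b -> P (Pair a b))
  (hE : forall a b, P a -> P b -> P (Enc a b))
  (hF : forall f args, Forall P args -> P (Fn f args)) : forall t, P t.
Proof.
  fix IH 1; destruct t as [n|n|a|a b|a b|a b|a b|f args].
  - apply hN.
  - apply hV.
  - apply hP, IH.
  - apply hS; apply IH.
  - apply hB; apply IH.
  - apply hPa; apply IH.
  - apply hE; apply IH.
  - apply hF; induction args as [|x args IHargs]; constructor; [apply IH | exact IHargs].
Qed.

Ltac gterm_auto := unfold Defs.gterm in *; simpl in *; tauto.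

Lemma wf_Fn f args : wf arity (Fn f args) <-> length args = arity f /\ Forall (wf arity) args.
Proof.
  simpl; split; intros [Hl Hw]; split; [exact Hl| |exact Hl|]; clear Hl.
  - induction args; simpl in *; constructor; tauto.
  - induction Hw; simpl; tauto.
Qed.

Lemma gterm_Fn f args : gterm (Fn f args) <-> length args = arity f /\ Forall gterm args.
Proof.
  unfold Defs.gterm; simpl; split.
  - intros [[Hl Hw] Hg]; split; [exact Hl|]; clear Hl.
    induction args; simpl in *; constructor; tauto.
  - intros [Hl Hg]; rewrite Hl; split; [split|]; auto; clear Hl;
      induction Hg; simpl in *; tauto.
Qed.

Lemma isub_gterm a b : isub a b -> gterm b -> gterm a.
Proof.
  destruct 1; try gterm_auto.
  intros [_ Hg]%gterm_Fn; rewrite Forall_forall in Hg; auto.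
Qed.

Lemma subterm_gterm a b : subterm a b -> gterm b -> gterm a.
Proof. induction 1; eauto using isub_gterm. Qed.

Lemma ctx_clos_gterm (Q : relation term) :
  (forall a b, Q a b -> gterm a -> gterm b) ->
  forall a b, ctx_clos Q a b -> gterm a -> gterm b.
Proof.
  intros HQ a b; induction 1; try gterm_auto; eauto.
  rewrite !gterm_Fn, !Forall_app, length_app, length_app.
  intros (Hl & Hl1 & Ha%Forall_cons_iff); simpl in *.
  split; [exact Hl|]. split; auto. constructor; tauto.
Qed.

Lemma ctx_clos_transp (Q : relation term) a b :
  ctx_clos Q a b -> ctx_clos (transp _ Q) b a.
Proof.
  induction 1; [apply cc_base | apply cc_pub | apply cc_sign1 | apply cc_sign2
    | apply cc_blind1 | apply cc_blind2 | apply cc_pair1 | apply cc_pair2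
    | apply cc_enc1 | apply cc_enc2 | apply cc_fn]; assumption.
Qed.

Lemma ac_axiom_gterm a b : ac_axiom oplus a b -> gterm a <-> gterm b.
Proof.
  destruct 1 as [o a b c Ho | o a b Ho]; generalize (oplus_binary HE Ho);
    unfold Defs.gterm; simpl; intros ->; intuition.
Qed.

Lemma ac_eq_gterm a b : ac_eq a b -> gterm a <-> gterm b.
Proof.
  induction 1 as [a b Hab| | |]; try tauto.
  assert (Hax : forall x y, ac_axiom oplus x y -> gterm x -> gterm y)
    by (intros x y Hxy; apply (ac_axiom_gterm Hxy)).
  assert (Hax' : forall x y, transp _ (ac_axiom oplus) x y -> gterm x -> gterm y)
    by (intros x y Hxy; apply (ac_axiom_gterm Hxy)).
  split; [exact (ctx_clos_gterm Hax Hab) | exact (ctx_clos_gterm Hax' (ctx_clos_transp Hab))].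
Qed.

Lemma subterm_isub a b c : subterm a b -> isub b c -> subterm a c.
Proof. intros Hab Hbc; exact (rt_trans _ _ _ _ _ Hab (rt_step _ _ _ _ Hbc)). Qed.

Lemma subterm_subst s a b : subterm a b -> subterm (subst s a) (subst s b).
Proof.
  induction 1 as [a b Hab| |]; [apply rt_step | apply rt_refl | eapply rt_trans; eauto].
  destruct Hab; constructor; apply in_map; assumption.
Qed.

Lemma gterm_subst s r : wf arity r ->
  (forall n, occurs_var n r -> gterm (s n)) -> gterm (subst s r).
Proof.
  unfold occurs_var.
  induction r using term_ind_nested; intros Hw Hs.
  1: gterm_auto.
  1: apply Hs, rt_refl.
  1: assert (gterm (subst s r)) by (apply IHr; eauto using isub, subterm_isub);
    gterm_auto.
  1-4: destruct Hw;
    assert (gterm (subst s r1)) by (apply IHr1; eauto using isub, subterm_isub);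
    assert (gterm (subst s r2)) by (apply IHr2; eauto using isub, subterm_isub);
    gterm_auto.
  apply wf_Fn in Hw as [Hl Hw]. apply gterm_Fn; rewrite length_map; split; [exact Hl|].
  apply Forall_forall; intros y (x & <- & Hx)%in_map_iff.
  rewrite Forall_forall in H, Hw.
  apply H; eauto using isub, subterm_isub.
Qed.

Lemma rule_inst_gterm a b : rule_inst R a b -> gterm a -> gterm b.
Proof.
  intros (l & r & s & Hin & -> & ->) Hl.
  destruct (rules_over_SigmaE HE _ _ Hin) as (_ & _ & _ & Hwr).
  apply gterm_subst; [exact Hwr|]. intros n Hn.
  apply (rules_vars HE _ Hin), (subterm_subst s) in Hn.
  exact (subterm_gterm Hn Hl).
Qed.

Lemma rstepAC_gterm a b : rstepAC a b -> gterm a -> gterm b.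
Proof.
  intros (a' & b' & Haa' & Hab' & Hb'b) Ha.
  apply (ac_eq_gterm Hb'b), (ctx_clos_gterm rule_inst_gterm Hab'), (ac_eq_gterm Haa'), Ha.
Qed.

Lemma rt_gterm a b : rt a b -> gterm a -> gterm b.
Proof. induction 1; eauto using rstepAC_gterm. Qed.

Definition head_match (Q : relation term) (t u : term) : Prop :=
  match t, u with
  | Name _ n, Name _ m => n = m
  | Var _ n, Var _ m => n = m
  | Pub a, Pub b => Q a b
  | Sign a1 a2, Sign b1 b2
  | Blind a1 a2, Blind b1 b2
  | Pair a1 a2, Pair b1 b2
  | Enc a1 a2, Enc b1 b2 => Q a1 b1 /\ Q a2 b2
  | _, _ => False
  end.

Lemma head_match_guarded Q t u : head_match Q t u -> guarded t /\ guarded u.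
Proof. destruct t, u; simpl; tauto. Qed.

Lemma head_match_impl (Q1 Q2 : relation term) t u :
  inclusion _ Q1 Q2 -> head_match Q1 t u -> head_match Q2 t u.
Proof. intro H; destruct t, u; simpl; intuition. Qed.

Lemma head_match_refl (Q : relation term) t :
  reflexive _ Q -> guarded t -> head_match Q t t.
Proof. intros H Ht; destruct t; simpl in *; intuition. Qed.

Lemma head_match_sym (Q : relation term) t u :
  symmetric _ Q -> head_match Q t u -> head_match Q u t.
Proof. intro H; destruct t, u; simpl; intuition. Qed.

Lemma head_match_trans (Q : relation term) t u v :
  transitive _ Q -> head_match Q t u -> head_match Q u v -> head_match Q t v.
Proof. intro H; destruct t, u, v; simpl; intuition eauto; congruence. Qed.

Lemma ctx_clos_head_match (Q : relation term) t u :
  (forall a b, Q a b -> ~ guarded a) -> ctx_clos Q t u -> guarded t ->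
  head_match (fun x y => x = y \/ ctx_clos Q x y) t u.
Proof. intros HQ; destruct 1; simpl; intros; try contradiction; auto. exfalso; eapply HQ; eauto. Qed.

Lemma ac_axiom_unguarded a b : ac_axiom oplus a b -> ~ guarded a /\ ~ guarded b.
Proof. destruct 1; simpl; auto. Qed.

Lemma ac_step_guarded a b : ctx_clos (ac_axiom oplus) a b -> guarded a <-> guarded b.
Proof. destruct 1 as [a b Hab| | | | | | | | | |]; simpl; try tauto. apply ac_axiom_unguarded in Hab; tauto. Qed.

Lemma ac_eq_guarded a b : ac_eq a b -> guarded a <-> guarded b.
Proof. induction 1; eauto using ac_step_guarded; tauto. Qed.

Lemma ac_eq_head_match t u : ac_eq t u -> guarded t -> head_match ac_eq t u.
Proof.
  induction 1 as [t u Htu| t| t u Htu IH| t u v Htu IH1 Huv IH2]; intro Ht.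
  - apply (head_match_impl (Q1 := fun x y => x = y \/ ctx_clos (ac_axiom oplus) x y)).
    + intros x y [<-|Hxy]; [apply rst_refl | apply rst_step, Hxy].
    + apply ctx_clos_head_match; [|exact Htu|exact Ht].
      intros a b Hab; apply (ac_axiom_unguarded Hab).
  - apply head_match_refl; [intro; apply rst_refl | exact Ht].
  - apply head_match_sym; [intros x y; apply rst_sym|].
    apply IH, (ac_eq_guarded Htu), Ht.
  - apply (head_match_trans (u := u)); [intros x y z; apply rst_trans | apply IH1, Ht |].
    apply IH2, (ac_eq_guarded Htu), Ht.
Qed.

Lemma ac_eq_E_eq a b : ac_eq a b -> E_eq a b.
Proof.
  induction 1; [apply rst_step; right; assumption | apply rst_refl
    | apply rst_sym; assumption | eapply rst_trans; eassumption].
Qed.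

Lemma rstepAC_E_eq a b : rstepAC a b -> E_eq a b.
Proof.
  intros (a' & b' & Haa' & Hab' & Hb'b).
  apply (rst_trans _ _ _ a'); [apply ac_eq_E_eq, Haa'|].
  apply (rst_trans _ _ _ b'); [apply rst_step; left; exact Hab' | apply ac_eq_E_eq, Hb'b].
Qed.

Lemma rt_E_eq a b : rt a b -> E_eq a b.
Proof.
  induction 1; [apply rstepAC_E_eq; assumption | apply rst_refl | eapply rst_trans; eassumption].
Qed.

Lemma rule_inst_unguarded a b : rule_inst R a b -> ~ guarded a.
Proof.
  intros (l & r & s & Hin & -> & ->).
  destruct (rules_over_SigmaE HE _ _ Hin) as (Hl & _).
  generalize (rules_lhs_not_var HE _ Hin).
  destruct l; simpl in *; auto. intros Hv; destruct (Hv n eq_refl).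
Qed.

Lemma rstepAC_head_match t u : rstepAC t u -> guarded t -> head_match E_eq t u.
Proof.
  intros (t' & u' & Htt' & Htu' & Hu'u) Ht.
  assert (C1 := ac_eq_head_match Htt' Ht).
  assert (C2 := ctx_clos_head_match rule_inst_unguarded Htu' (proj2 (head_match_guarded C1))).
  assert (C3 := ac_eq_head_match Hu'u (proj2 (head_match_guarded C2))).
  apply (head_match_trans (u := t')); [intros x y z; apply rst_trans|..].
  { apply (head_match_impl ac_eq_E_eq C1). }
  apply (head_match_trans (u := u')); [intros x y z; apply rst_trans|..].
  - apply (head_match_impl (Q1 := fun x y => x = y \/ rstep R x y)); [|exact C2].
    intros x y [<-|Hxy]; [apply rst_refl | apply rst_step; left; exact Hxy].
  - apply (head_match_impl ac_eq_E_eq C3).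
Qed.

Lemma rt_head_match t u : rt t u -> guarded t -> head_match E_eq t u.
Proof.
  induction 1 as [t u Htu| t| t u v Htu IH1 Huv IH2]; intro Ht.
  - apply rstepAC_head_match; assumption.
  - apply head_match_refl; [intro; apply rst_refl | exact Ht].
  - assert (C := IH1 Ht).
    apply (head_match_trans (u := u)); [intros x y z; apply rst_trans | exact C |].
    apply IH2, (head_match_guarded C).
Qed.

Lemma ac_eq_rt t t' u : ac_eq t t' -> rt t' u -> exists u', rt t u' /\ ac_eq u' u.
Proof.
  intros Htt' Ht'u. apply clos_rt_rt1n in Ht'u.
  destruct Ht'u as [|v u (v' & w & Ht'v' & Hv'w & Hwv) Hvu].
  - exists t; split; [apply rt_refl | exact Htt'].
  - exists u; split; [|apply rst_refl].
    apply (rt_trans _ _ _ v); [|apply clos_rt1n_rt, Hvu].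
    apply rt_step; exists v', w; split; [eapply rst_trans; eassumption | tauto].
Qed.

Lemma E_eq_joinable t u : E_eq t u -> exists v w, rt t v /\ rt u w /\ ac_eq v w.
Proof.
  induction 1 as [t u [Htu|Htu]| t| t u _ (v & w & Htv & Huw & Hvw)
    | t u v _ (t1 & u1 & Htt1 & Huu1 & Hac1) _ (u2 & v2 & Huu2 & Hvv2 & Hac2)].
  - exists u, u; split; [|split]; [apply rt_step | apply rt_refl | apply rst_refl].
    exists t, u; repeat split; [apply rst_refl | exact Htu | apply rst_refl].
  - exists t, u; split; [|split]; [apply rt_refl | apply rt_refl | apply rst_step, Htu].
  - exists t, t; split; [|split]; [apply rt_refl | apply rt_refl | apply rst_refl].
  - exists w, v; split; [|split]; [exact Huw | exact Htv | apply rst_sym, Hvw].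
  - destruct (R_confluent_modAC HE Huu1 Huu2) as (a & b & Hu1a & Hu2b & Hab).
    destruct (ac_eq_rt Hac1 Hu1a) as (a' & Ht1a' & Ha'a).
    destruct (ac_eq_rt (rst_sym _ _ _ _ Hac2) Hu2b) as (b' & Hv2b' & Hb'b).
    exists a', b'; split; [|split]; [eapply rt_trans; eassumption | eapply rt_trans; eassumption |].
    apply (rst_trans _ _ _ a); [exact Ha'a|].
    apply (rst_trans _ _ _ b); [exact Hab | apply rst_sym, Hb'b].
Qed.

Lemma irreducible_rt t u : irreducible t -> rt t u -> u = t.
Proof.
  intros Ht Htu. apply clos_rt_rt1n in Htu.
  destruct Htu as [|v u Htv _]; [reflexivity | destruct (Ht v Htv)].
Qed.

Lemma irreducible_E_eq_ac_eq t u : irreducible t -> irreducible u -> E_eq t u -> ac_eq t u.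
Proof.
  intros Ht Hu Htu. destruct (E_eq_joinable Htu) as (v & w & Htv & Huw & Hvw).
  rewrite (irreducible_rt Ht Htv), (irreducible_rt Hu Huw) in Hvw. exact Hvw.
Qed.

Lemma irreducible_E_eq_head_match T X : irreducible T -> E_eq T X -> guarded X ->
  head_match E_eq X T.
Proof.
  intros HT HTX HX. destruct (E_eq_joinable HTX) as (v & w & HTv & HXw & Hvw).
  rewrite (irreducible_rt HT HTv) in Hvw.
  assert (C := rt_head_match HXw HX).
  apply (head_match_trans (u := w)); [intros x y z; apply rst_trans | exact C |].
  apply (head_match_impl ac_eq_E_eq), ac_eq_head_match; [apply rst_sym, Hvw|].
  apply (head_match_guarded C).
Qed.

Definition one_hole (f : term -> term) : Prop :=
  forall (Q : relation term) a b, ctx_clos Q a b -> ctx_clos Q (f a) (f b).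

Lemma one_hole_ac_eq f a b : one_hole f -> ac_eq a b -> ac_eq (f a) (f b).
Proof.
  intros Hf; induction 1; [apply rst_step, Hf; assumption | apply rst_refl
    | apply rst_sym; assumption | eapply rst_trans; eassumption].
Qed.

Lemma one_hole_E_eq f a b : one_hole f -> E_eq a b -> E_eq (f a) (f b).
Proof.
  intros Hf; induction 1 as [a b [Hab|Hab]| | |];
    [apply rst_step; left; apply Hf, Hab | apply rst_step; right; apply Hf, Hab
    | apply rst_refl | apply rst_sym; assumption | eapply rst_trans; eassumption].
Qed.

Lemma one_hole_irreducible f a : one_hole f -> irreducible (f a) -> irreducible a.
Proof.
  intros Hf Ha u (a' & u' & Haa' & Ha'u' & Hu'u).
  apply (Ha (f u)); exists (f a'), (f u').
  split; [|split]; [apply one_hole_ac_eq | apply Hf | apply one_hole_ac_eq]; assumption.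
Qed.

Lemma isub_one_hole a t : isub a t -> exists f, one_hole f /\ t = f a.
Proof.
  destruct 1 as [a|a b|a b|a b|a b|a b|a b|a b|a b|g a args Ha].
  1: exists (fun x => Pub x).
  2: exists (fun x => Sign x b).
  3: exists (fun x => Sign a x).
  4: exists (fun x => Blind x b).
  5: exists (fun x => Blind a x).
  6: exists (fun x => Pair x b).
  7: exists (fun x => Pair a x).
  8: exists (fun x => Enc x b).
  9: exists (fun x => Enc a x).
  10: destruct (in_split _ _ Ha) as (l1 & l2 & ->); exists (fun x => Fn g (l1 ++ x :: l2)).
  all: split; [intros Q x y Hxy; constructor; exact Hxy | reflexivity].
Qed.

Lemma irreducible_isub a t : isub a t -> irreducible t -> irreducible a.
Proof. intros (f & Hf & ->)%isub_one_hole; apply one_hole_irreducible, Hf. Qed.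

Lemma E_eq_Pub a b : E_eq a b -> E_eq (Pub a) (Pub b).
Proof. apply one_hole_E_eq; intros Q x y Hxy; constructor; exact Hxy. Qed.

Lemma E_eq_Sign a a' b b' : E_eq a a' -> E_eq b b' -> E_eq (Sign a b) (Sign a' b').
Proof.
  intros Ha Hb; apply (rst_trans _ _ _ (Sign a' b)).
  - apply (one_hole_E_eq (f := fun x => Sign x b)); [intros Q x y Hxy; constructor|]; assumption.
  - apply (one_hole_E_eq (f := fun x => Sign a' x)); [intros Q x y Hxy; constructor|]; assumption.
Qed.

Lemma E_eq_Fn f args args' : Forall2 E_eq args args' -> E_eq (Fn f args) (Fn f args').
Proof.
  intro H. enough (Hpre : forall l, E_eq (Fn f (l ++ args)) (Fn f (l ++ args'))) by exact (Hpre []).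
  induction H as [|a a' args args' Ha _ IH]; intro l; [apply rst_refl|].
  apply (rst_trans _ _ _ (Fn f (l ++ a' :: args))).
  - apply (one_hole_E_eq (f := fun x => Fn f (l ++ x :: args))); [intros Q x y Hxy; constructor|]; assumption.
  - specialize (IH (l ++ [a'])). rewrite <- !app_assoc in IH. exact IH.
Qed.

Lemma irreducible_Sign a b : irreducible a -> irreducible b -> irreducible (Sign a b).
Proof.
  intros Ha Hb u (t & v & Hst & Htv & Hvu).
  assert (C := ac_eq_head_match Hst I).
  destruct t as [| | |t1 t2| | | |]; simpl in C; try contradiction.
  inversion Htv as [x y Hxy| |x y z Hxy|x y z Hxy| | | | | | |]; subst.
  - apply (rule_inst_unguarded Hxy I).
  - apply (Ha y); exists t1, y; repeat split; [apply C | exact Hxy | apply rst_refl].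
  - apply (Hb y); exists t2, y; repeat split; [apply C | exact Hxy | apply rst_refl].
Qed.


Notation ND := (ND arity oplus R).
Notation SC := (SC arity oplus R).
Implicit Types (G : list term).

Lemma ND_ind_nested G (P : term -> Prop)
  (h_id : forall M, In M G -> P M)
  (h_eE : forall M K, ND G (Enc M K) -> P (Enc M K) -> ND G K -> P K -> P M)
  (h_eI : forall M K, ND G M -> P M -> ND G K -> P K -> P (Enc M K))
  (h_pE1 : forall M N, ND G (Pair M N) -> P (Pair M N) -> P M)
  (h_pE2 : forall M N, ND G (Pair M N) -> P (Pair M N) -> P N)
  (h_pI : forall M N, ND G M -> P M -> ND G N -> P N -> P (Pair M N))
  (h_sE : forall M K, ND G (Sign M K) -> P (Sign M K) -> ND G (Pub K) -> P (Pub K) -> P M)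
  (h_sI : forall M K, ND G M -> P M -> ND G K -> P K -> P (Sign M K))
  (h_bE1 : forall M K, ND G (Blind M K) -> P (Blind M K) -> ND G K -> P K -> P M)
  (h_bI : forall M K, ND G M -> P M -> ND G K -> P K -> P (Blind M K))
  (h_bE2 : forall M Rr K, ND G (Sign (Blind M Rr) K) -> P (Sign (Blind M Rr) K) ->
     ND G Rr -> P Rr -> P (Sign M K))
  (h_gI : forall f args, length args = arity f -> Forall (ND G) args -> Forall P args ->
     P (Fn f args))
  (h_ap : forall M N, ND G N -> P N -> E_eq M N -> gterm M -> P M) :
  forall M, ND G M -> P M.
Proof.
  fix IH 2; intros X D; destruct D as [M h|M K h1 h2|M K h1 h2|M N h1|M N h1|M N h1 h2
    |M K h1 h2|M K h1 h2|M K h1 h2|M K h1 h2|M Rr K h1 h2|f args hl hf|M N h1 he hg].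
  - exact (h_id M h).
  - exact (h_eE M K h1 (IH _ h1) h2 (IH _ h2)).
  - exact (h_eI M K h1 (IH _ h1) h2 (IH _ h2)).
  - exact (h_pE1 M N h1 (IH _ h1)).
  - exact (h_pE2 M N h1 (IH _ h1)).
  - exact (h_pI M N h1 (IH _ h1) h2 (IH _ h2)).
  - exact (h_sE M K h1 (IH _ h1) h2 (IH _ h2)).
  - exact (h_sI M K h1 (IH _ h1) h2 (IH _ h2)).
  - exact (h_bE1 M K h1 (IH _ h1) h2 (IH _ h2)).
  - exact (h_bI M K h1 (IH _ h1) h2 (IH _ h2)).
  - exact (h_bE2 M Rr K h1 (IH _ h1) h2 (IH _ h2)).
  - apply (h_gI f args hl hf); clear hl.
    induction hf as [|x args hx hf IHf]; constructor; [exact (IH x hx) | exact IHf].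
  - exact (h_ap M N h1 (IH _ h1) he hg).
Qed.

Lemma ND_gterm G : (forall x, In x G -> gterm x) -> forall M, ND G M -> gterm M.
Proof.
  intro HG; apply ND_ind_nested; intros; try gterm_auto; auto.
  apply gterm_Fn; split; assumption.
Qed.

Lemma ND_cut G1 G2 : (forall x, In x G1 -> ND G2 x) -> forall M, ND G1 M -> ND G2 M.
Proof.
  intro HG; apply ND_ind_nested; intros; eauto using Defs.ND.
Qed.

Definition normal t : Prop := gterm t /\ irreducible t.

Definition normal_ctx G : Prop := forall x, In x G -> normal x.

Lemma valid_seq_iff G T : valid_seq arity oplus R G T <-> normal_ctx G /\ normal T.
Proof.
  unfold valid_seq, normal_ctx, normal; simpl; split.
  - intro H; split; [intros x Hx|]; apply H; tauto.
  - intros [HG HT] t [<-|Ht]; auto.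
Qed.

Lemma SC_valid G T : SC G T -> normal_ctx G /\ normal T.
Proof. intro D; apply valid_seq_iff; destruct D; assumption. Qed.

Lemma normal_ctx_app l G G' : normal_ctx (l ++ G) -> normal_ctx G' -> normal_ctx (l ++ G').
Proof.
  intros Hl HG' x [Hx|Hx]%in_app_or; [apply Hl, in_or_app; left|apply HG']; exact Hx.
Qed.

Lemma incl_app_mono (l G G' : list term) : incl G G' -> incl (l ++ G) (l ++ G').
Proof. intro H; apply incl_app; [apply incl_appl, incl_refl | apply incl_appr, H]. Qed.

Lemma ectx_incl G G' : incl G G' -> forall C, ectx arity G C -> ectx arity G' C.
Proof.
  intro Hinc; fix IH 2; intros C [M h|f args hl hf].
  - apply ectx_hole, Hinc, h.
  - apply ectx_fn; [exact hl|]; clear hl.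
    induction hf as [|x args hx hf IHf]; constructor; [exact (IH x hx) | exact IHf].
Qed.

Ltac weaken_premise IH D l :=
  apply (IH (l ++ _));
  [apply (incl_app_mono (l := l)); assumption
  | apply (normal_ctx_app (l := l) (proj1 (SC_valid D))); assumption].

Lemma SC_weaken G G' T : SC G T -> incl G G' -> normal_ctx G' -> SC G' T.
Proof.
  intro D; revert G'.
  induction D as [G M C Hv Hc He|G M T Hv D1 IH1 D2 IH2|G M N T Hv Hin D IH
    |G M N Hv D1 IH1 D2 IH2|G M K N Hv Hin D1 IH1 D2 IH2|G M K Hv D1 IH1 D2 IH2
    |G M K L N Hv Hin1 Hin2 Hac D IH|G M K Hv D1 IH1 D2 IH2|G M K N Hv Hin D1 IH1 D2 IH2
    |G M K Hv D1 IH1 D2 IH2|G M Rr K N Hv Hin D1 IH1 D2 IH2|G A M Hv Hsub Hg D1 IH1 D2 IH2];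
    intros G' Hinc HG';
    (assert (Hv' : valid_seq arity oplus R G' _) by
      (apply valid_seq_iff; split; [exact HG' | apply valid_seq_iff in Hv; apply Hv])).
  - exact (S_id Hv' (ectx_incl Hinc Hc) He).
  - apply (S_cut (M := M) Hv'); [apply IH1 | weaken_premise IH2 D2 [M]]; assumption.
  - apply (S_pL Hv' (Hinc _ Hin)); weaken_premise IH D [M; N].
  - apply (S_pR Hv'); [apply IH1 | apply IH2]; assumption.
  - apply (S_eL Hv' (Hinc _ Hin)); [apply IH1; assumption | weaken_premise IH2 D2 [M; K]].
  - apply (S_eR Hv'); [apply IH1 | apply IH2]; assumption.
  - apply (S_signL Hv' (Hinc _ Hin1) (Hinc _ Hin2) Hac); weaken_premise IH D [M].
  - apply (S_signR Hv'); [apply IH1 | apply IH2]; assumption.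
  - apply (S_blindL1 Hv' (Hinc _ Hin)); [apply IH1; assumption | weaken_premise IH2 D2 [M; K]].
  - apply (S_blindR Hv'); [apply IH1 | apply IH2]; assumption.
  - apply (S_blindL2 Hv' (Hinc _ Hin)); [apply IH1; assumption | weaken_premise IH2 D2 [Sign M K; Rr]].
  - apply (S_gs (A := A) Hv'); [|exact Hg | apply IH1; assumption | weaken_premise IH2 D2 [A]].
    destruct Hsub as (t & Ht & HAt); exists t; split; [|exact HAt].
    destruct Ht as [<-|Ht]; [left | right; apply Hinc]; auto.
Qed.

Lemma SC_cut_all G L T : normal_ctx G -> normal T -> Forall normal L -> Forall (SC G) L ->
  SC (L ++ G) T -> SC G T.
Proof.
  intros HG HT HL DL; revert G HG DL.
  induction HL as [|a L Ha HL IH]; intros G HG DL D; inversion DL as [|? ? Da DL']; subst;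
    [exact D|].
  assert (HaG : normal_ctx (a :: G)) by (intros x [<-|Hx]; auto).
  apply (S_cut (proj2 (valid_seq_iff _ _) (conj HG HT)) Da).
  apply IH; [exact HaG | |].
  - refine (Forall_impl _ _ DL'); intros x Dx.
    apply (SC_weaken Dx); [apply incl_tl, incl_refl | exact HaG].
  - apply (SC_weaken D).
    + intros x [<-|[Hx|Hx]%in_app_or]; apply in_or_app; simpl; tauto.
    + intros x [Hx|Hx]%in_app_or; [exact (proj1 (Forall_forall _ _) HL x Hx) | exact (HaG x Hx)].
Qed.

Lemma ectx_ND G : forall C, ectx arity G C -> ND G C.
Proof.
  fix IH 2; intros C [M h|f args hl hf].
  - apply N_id, h.
  - apply N_gI; [exact hl|]; clear hl.
    induction hf as [|x args hx hf IHf]; constructor; [exact (IH x hx) | exact IHf].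
Qed.

Lemma ND_extend G l T : Forall (ND G) l -> ND (l ++ G) T -> ND G T.
Proof.
  intros Hl; apply ND_cut; intros x [Hx|Hx]%in_app_or.
  - exact (proj1 (Forall_forall _ _) Hl x Hx).
  - apply N_id, Hx.
Qed.

Lemma SC_ND G T : SC G T -> ND G T.
Proof.
  induction 1 as [G M C Hv Hc He|G M T Hv D1 IH1 D2 IH2|G M N T Hv Hin D IH
    |G M N Hv D1 IH1 D2 IH2|G M K N Hv Hin D1 IH1 D2 IH2|G M K Hv D1 IH1 D2 IH2
    |G M K L N Hv Hin1 Hin2 Hac D IH|G M K Hv D1 IH1 D2 IH2|G M K N Hv Hin D1 IH1 D2 IH2
    |G M K Hv D1 IH1 D2 IH2|G M Rr K N Hv Hin D1 IH1 D2 IH2|G A M Hv Hsub Hg D1 IH1 D2 IH2].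
  - apply (N_approx (ectx_ND Hc) He), (proj2 (proj1 (valid_seq_iff _ _) Hv)).
  - apply (ND_extend (l := [M])); auto.
  - apply (ND_extend (l := [M; N])); [|exact IH].
    constructor; [|constructor; [|constructor]]; eauto using Defs.ND.
  - apply N_pI; assumption.
  - apply (ND_extend (l := [M; K])); [|exact IH2].
    constructor; [|constructor; [|constructor]]; eauto using Defs.ND.
  - apply N_eI; assumption.
  - apply (ND_extend (l := [M])); [|exact IH].
    constructor; [|constructor].
    apply (N_signE (K := K)); [apply N_id, Hin1|].
    apply (N_approx (N := Pub L)); [apply N_id, Hin2 | apply E_eq_Pub, ac_eq_E_eq, Hac |].
    destruct (proj1 (proj1 (valid_seq_iff _ _) Hv) _ Hin1) as [Hg _]; gterm_auto.
  - apply N_signI; assumption.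
  - apply (ND_extend (l := [M; K])); [|exact IH2].
    constructor; [|constructor; [|constructor]]; eauto using Defs.ND.
  - apply N_blindI; assumption.
  - apply (ND_extend (l := [Sign M K; Rr])); [|exact IH2].
    constructor; [|constructor; [|constructor]]; eauto using Defs.ND.
  - apply (ND_extend (l := [A])); auto.
Qed.

Lemma normal_isub a t : isub a t -> normal t -> normal a.
Proof. intros Hat [Hg Hi]; split; [exact (isub_gterm Hat Hg) | exact (irreducible_isub Hat Hi)]. Qed.

Lemma normal_ctx_cons x G : normal x -> normal_ctx G -> normal_ctx (x :: G).
Proof. intros Hx HG y [<-|Hy]; auto. Qed.

Lemma valid_seq_intro G T : normal_ctx G -> normal T -> valid_seq arity oplus R G T.
Proof. intros HG HT; apply valid_seq_iff; split; assumption. Qed.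

Ltac normal_auto :=
  repeat (apply valid_seq_intro || apply normal_ctx_cons);
  eauto using normal_isub, isub.

Lemma SC_E_eq_hyp G x T : normal_ctx G -> normal T -> In x G -> E_eq T x -> SC G T.
Proof. intros HG HT Hx HTx; apply (S_id (C := x)); [normal_auto | apply ectx_hole, Hx | exact HTx]. Qed.

Lemma irreducible_E_eq_Pub T a : irreducible T -> E_eq T (Pub a) ->
  exists t, T = Pub t /\ E_eq t a.
Proof.
  intros HT HTX; assert (C := irreducible_E_eq_head_match HT HTX I).
  destruct T as [| |t| | | | |]; simpl in C; try contradiction.
  exists t; split; [reflexivity | apply rst_sym, C].
Qed.

Ltac invert_binary T HT HTX :=
  let C := fresh in
  assert (C := irreducible_E_eq_head_match HT HTX I);
  destruct T as [| | |t u|t u|t u|t u|]; simpl in C; try contradiction;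
  exists t, u; split; [reflexivity | split; apply rst_sym, C].

Lemma irreducible_E_eq_Sign T a b : irreducible T -> E_eq T (Sign a b) ->
  exists t u, T = Sign t u /\ E_eq t a /\ E_eq u b.
Proof. intros HT HTX; invert_binary T HT HTX. Qed.

Lemma irreducible_E_eq_Blind T a b : irreducible T -> E_eq T (Blind a b) ->
  exists t u, T = Blind t u /\ E_eq t a /\ E_eq u b.
Proof. intros HT HTX; invert_binary T HT HTX. Qed.

Lemma irreducible_E_eq_Pair T a b : irreducible T -> E_eq T (Pair a b) ->
  exists t u, T = Pair t u /\ E_eq t a /\ E_eq u b.
Proof. intros HT HTX; invert_binary T HT HTX. Qed.

Lemma irreducible_E_eq_Enc T a b : irreducible T -> E_eq T (Enc a b) ->
  exists t u, T = Enc t u /\ E_eq t a /\ E_eq u b.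
Proof. intros HT HTX; invert_binary T HT HTX. Qed.

Section NormalForms.
Variable nf : term -> term.
Hypothesis Hnf : forall t, is_nf_of oplus R t (nf t).

Lemma nf_E_eq t : E_eq (nf t) t.
Proof. apply rst_sym, rt_E_eq, (Hnf t). Qed.

Lemma nf_normal t : gterm t -> normal (nf t).
Proof. intro Ht; split; [exact (rt_gterm (proj1 (Hnf t)) Ht) | apply (Hnf t)]. Qed.

Section Context.
Variable G : list term.
Hypothesis HG : normal_ctx G.

(* Quantifying over all normal terms E-equal to [M], not only [nf M], makes the
   rule (≈) of N trivial in the completeness induction. *)
Definition nf_derivable M : Prop := forall T, normal T -> E_eq T M -> SC G T.

Lemma nf_derivable_In M : In (nf M) G -> nf_derivable M.
Proof.
  intros HM T HT HTM; apply (SC_E_eq_hyp HG HT HM).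
  apply (rst_trans _ _ _ M); [exact HTM | apply rst_sym, nf_E_eq].
Qed.

Lemma nf_derivable_E_eq M N : E_eq M N -> nf_derivable N -> nf_derivable M.
Proof. intros HMN DN T HT HTM; apply DN; [exact HT | eapply rst_trans; eassumption]. Qed.

Lemma nf_derivable_Enc M K : nf_derivable M -> nf_derivable K -> nf_derivable (Enc M K).
Proof.
  intros DM DK T HT HTX.
  destruct (irreducible_E_eq_Enc (proj2 HT) HTX) as (t & u & -> & Ht & Hu).
  apply S_eR; [normal_auto | apply DM | apply DK]; normal_auto.
Qed.

Lemma nf_derivable_Pair M N : nf_derivable M -> nf_derivable N -> nf_derivable (Pair M N).
Proof.
  intros DM DN T HT HTX.
  destruct (irreducible_E_eq_Pair (proj2 HT) HTX) as (t & u & -> & Ht & Hu).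
  apply S_pR; [normal_auto | apply DM | apply DN]; normal_auto.
Qed.

Lemma nf_derivable_Sign M K : nf_derivable M -> nf_derivable K -> nf_derivable (Sign M K).
Proof.
  intros DM DK T HT HTX.
  destruct (irreducible_E_eq_Sign (proj2 HT) HTX) as (t & u & -> & Ht & Hu).
  apply S_signR; [normal_auto | apply DM | apply DK]; normal_auto.
Qed.

Lemma nf_derivable_Blind M K : nf_derivable M -> nf_derivable K -> nf_derivable (Blind M K).
Proof.
  intros DM DK T HT HTX.
  destruct (irreducible_E_eq_Blind (proj2 HT) HTX) as (t & u & -> & Ht & Hu).
  apply S_blindR; [normal_auto | apply DM | apply DK]; normal_auto.
Qed.

Lemma nf_derivable_cut X T : gterm X -> nf_derivable X -> normal T ->
  SC (nf X :: G) T -> SC G T.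
Proof.
  intros HX DX HT D.
  apply (S_cut (M := nf X)); [normal_auto | apply DX | exact D].
  - apply nf_normal, HX.
  - apply nf_E_eq.
Qed.

Lemma SC_weaken_cons x T : normal x -> SC G T -> SC (x :: G) T.
Proof. intros Hx D; apply (SC_weaken D); [apply incl_tl, incl_refl | normal_auto]. Qed.

Lemma nf_derivable_Enc_elim M K :
  gterm (Enc M K) -> nf_derivable (Enc M K) -> nf_derivable K -> nf_derivable M.
Proof.
  intros HX DX DK T HT HTM.
  destruct (irreducible_E_eq_Enc (proj2 (nf_normal HX)) (nf_E_eq _)) as (t & u & Hx & Ht & Hu).
  assert (Htu : normal (Enc t u)) by (rewrite <- Hx; apply nf_normal, HX).
  apply (nf_derivable_cut HX DX HT); rewrite Hx.
  apply (S_eL (M := t) (K := u)); [normal_auto | left; reflexivity | |].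
  - apply SC_weaken_cons, DK; normal_auto.
  - apply (SC_E_eq_hyp (x := t)); [normal_auto | exact HT | left; reflexivity |].
    eapply rst_trans; [exact HTM | apply rst_sym, Ht].
Qed.

Lemma nf_derivable_Pair_elim1 M N :
  gterm (Pair M N) -> nf_derivable (Pair M N) -> nf_derivable M.
Proof.
  intros HX DX T HT HTM.
  destruct (irreducible_E_eq_Pair (proj2 (nf_normal HX)) (nf_E_eq _)) as (t & u & Hx & Ht & Hu).
  assert (Htu : normal (Pair t u)) by (rewrite <- Hx; apply nf_normal, HX).
  apply (nf_derivable_cut HX DX HT); rewrite Hx.
  apply (S_pL (M := t) (N := u)); [normal_auto | left; reflexivity |].
  apply (SC_E_eq_hyp (x := t)); [normal_auto | exact HT | left; reflexivity |].
  eapply rst_trans; [exact HTM | apply rst_sym, Ht].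
Qed.

Lemma nf_derivable_Pair_elim2 M N :
  gterm (Pair M N) -> nf_derivable (Pair M N) -> nf_derivable N.
Proof.
  intros HX DX T HT HTN.
  destruct (irreducible_E_eq_Pair (proj2 (nf_normal HX)) (nf_E_eq _)) as (t & u & Hx & Ht & Hu).
  assert (Htu : normal (Pair t u)) by (rewrite <- Hx; apply nf_normal, HX).
  apply (nf_derivable_cut HX DX HT); rewrite Hx.
  apply (S_pL (M := t) (N := u)); [normal_auto | left; reflexivity |].
  apply (SC_E_eq_hyp (x := u)); [normal_auto | exact HT | right; left; reflexivity |].
  eapply rst_trans; [exact HTN | apply rst_sym, Hu].
Qed.

Lemma nf_derivable_Blind_elim M K :
  gterm (Blind M K) -> nf_derivable (Blind M K) -> nf_derivable K -> nf_derivable M.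
Proof.
  intros HX DX DK T HT HTM.
  destruct (irreducible_E_eq_Blind (proj2 (nf_normal HX)) (nf_E_eq _)) as (t & u & Hx & Ht & Hu).
  assert (Htu : normal (Blind t u)) by (rewrite <- Hx; apply nf_normal, HX).
  apply (nf_derivable_cut HX DX HT); rewrite Hx.
  apply (S_blindL1 (M := t) (K := u)); [normal_auto | left; reflexivity | |].
  - apply SC_weaken_cons, DK; normal_auto.
  - apply (SC_E_eq_hyp (x := t)); [normal_auto | exact HT | left; reflexivity |].
    eapply rst_trans; [exact HTM | apply rst_sym, Ht].
Qed.

Lemma nf_derivable_Sign_elim M K : gterm (Sign M K) -> gterm (Pub K) ->
  nf_derivable (Sign M K) -> nf_derivable (Pub K) -> nf_derivable M.
Proof.
  intros HX HY DX DY T HT HTM.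
  destruct (irreducible_E_eq_Sign (proj2 (nf_normal HX)) (nf_E_eq _)) as (t & u & Hx & Ht & Hu).
  destruct (irreducible_E_eq_Pub (proj2 (nf_normal HY)) (nf_E_eq _)) as (v & Hy & Hv).
  assert (Htu : normal (Sign t u)) by (rewrite <- Hx; apply nf_normal, HX).
  assert (Hpv : normal (Pub v)) by (rewrite <- Hy; apply nf_normal, HY).
  (* two E-equal normal forms are AC-equal, which is the side condition of sign_L *)
  assert (Huv : ac_eq u v).
  { apply irreducible_E_eq_ac_eq; [apply (normal_isub (isub_sign2 t u) Htu)
      | apply (normal_isub (isub_pub v) Hpv) | eapply rst_trans; [exact Hu | apply rst_sym, Hv]]. }
  apply (nf_derivable_cut HX DX HT); rewrite Hx.
  apply (S_cut (M := Pub v)); [normal_auto | |].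
  { apply SC_weaken_cons, DY; [exact Htu | exact Hpv | apply E_eq_Pub, Hv]. }
  apply (S_signL (M := t) (K := u) (L := v)); [normal_auto | right; left; reflexivity
    | left; reflexivity | exact Huv |].
  apply (SC_E_eq_hyp (x := t)); [normal_auto | exact HT | left; reflexivity |].
  eapply rst_trans; [exact HTM | apply rst_sym, Ht].
Qed.

Lemma nf_derivable_Blind_elim2 M Rr K : gterm (Sign (Blind M Rr) K) ->
  nf_derivable (Sign (Blind M Rr) K) -> nf_derivable Rr -> nf_derivable (Sign M K).
Proof.
  intros HX DX DR T HT HTX.
  destruct (irreducible_E_eq_Sign (proj2 (nf_normal HX)) (nf_E_eq _)) as (b & u & Hx & Hb & Hu).
  assert (Hbu : normal (Sign b u)) by (rewrite <- Hx; apply nf_normal, HX).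
  destruct (irreducible_E_eq_Blind (proj2 (normal_isub (isub_sign1 b u) Hbu)) Hb)
    as (t & r & -> & Ht & Hr).
  assert (Htr : normal (Blind t r)) by exact (normal_isub (isub_sign1 _ _) Hbu).
  assert (Htu : normal (Sign t u)).
  { split; [destruct Hbu as [Hg _]; gterm_auto|].
    apply irreducible_Sign; [apply (normal_isub (isub_blind1 t r) Htr)
      | apply (normal_isub (isub_sign2 _ u) Hbu)]. }
  apply (nf_derivable_cut HX DX HT); rewrite Hx.
  apply (S_blindL2 (M := t) (Rr := r) (K := u)); [normal_auto | left; reflexivity | |].
  - apply SC_weaken_cons, DR; normal_auto.
  - apply (SC_E_eq_hyp (x := Sign t u)); [normal_auto | exact HT | left; reflexivity |].
    eapply rst_trans; [exact HTX | apply E_eq_Sign; apply rst_sym; assumption].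
Qed.

Lemma nf_derivable_Fn f args : length args = arity f -> Forall gterm args ->
  Forall nf_derivable args -> nf_derivable (Fn f args).
Proof.
  intros Hl Hg D T HT HTX.
  assert (Hn : Forall normal (map nf args)).
  { apply Forall_map; refine (Forall_impl _ _ Hg); apply nf_normal. }
  apply (SC_cut_all (L := map nf args) HG HT Hn).
  - apply Forall_map; apply Forall_forall; intros x Hx.
    apply (Forall_forall _ _) with (x := x) in D; [|exact Hx].
    apply D; [apply nf_normal, (proj1 (Forall_forall _ _) Hg x Hx) | apply nf_E_eq].
  - apply (S_id (C := Fn f (map nf args))).
    + apply valid_seq_intro; [|exact HT].
      intros x [Hx|Hx]%in_app_or; [exact (proj1 (Forall_forall _ _) Hn x Hx) | apply HG, Hx].
    + apply ectx_fn; [rewrite length_map; exact Hl|].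
      apply Forall_forall; intros x Hx; apply ectx_hole, in_or_app; left; exact Hx.
    + eapply rst_trans; [exact HTX | apply E_eq_Fn].
      clear -Hnf; induction args; constructor; [apply rst_sym, nf_E_eq | assumption].
Qed.

End Context.

Lemma ND_nf_derivable G : (forall t, In t G -> gterm t) ->
  forall M, ND G M -> nf_derivable (map nf G) M.
Proof.
  intros HG.
  assert (HnG : normal_ctx (map nf G))
    by (intros x (t & <- & Ht)%in_map_iff; apply nf_normal, HG, Ht).
  assert (Hg := ND_gterm HG).
  apply ND_ind_nested; intros.
  - apply nf_derivable_In, in_map; assumption.
  - apply (nf_derivable_Enc_elim HnG (Hg _ H)); assumption.
  - apply nf_derivable_Enc; assumption.
  - apply (nf_derivable_Pair_elim1 HnG (Hg _ H)); assumption.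
  - apply (nf_derivable_Pair_elim2 HnG (Hg _ H)); assumption.
  - apply nf_derivable_Pair; assumption.
  - apply (nf_derivable_Sign_elim HnG (Hg _ H) (Hg _ H1)); assumption.
  - apply nf_derivable_Sign; assumption.
  - apply (nf_derivable_Blind_elim HnG (Hg _ H)); assumption.
  - apply nf_derivable_Blind; assumption.
  - apply (nf_derivable_Blind_elim2 HnG (Hg _ H)); assumption.
  - apply (nf_derivable_Fn HnG); [assumption | refine (Forall_impl _ Hg H0) | assumption].
  - apply (nf_derivable_E_eq H1 H0).
Qed.

Lemma SC_nf_ND G M : (forall t, In t G -> gterm t) -> gterm M ->
  SC (map nf G) (nf M) -> ND G M.
Proof.
  intros HG HM D.
  apply (N_approx (N := nf M)); [| apply rst_sym, nf_E_eq | exact HM].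
  apply (ND_cut (G1 := map nf G)); [| exact (SC_ND D)].
  intros x (t & <- & Ht)%in_map_iff.
  apply (N_approx (N := t)); [apply N_id, Ht | apply nf_E_eq | apply nf_normal, HG, Ht].
Qed.

End NormalForms.
End Systems.

Theorem proposition1 (F : Type) (arity : F -> nat) (oplus : option F)
  (R : list (term F * term F))
  (HE : presentation arity oplus R)
  (nf : term F -> term F)
  (Hnf : forall t, is_nf_of oplus R t (nf t))
  (G : list (term F)) (M : term F) :
  (forall t, In t G -> gterm arity t) -> gterm arity M ->
  (ND arity oplus R G M <-> SC arity oplus R (map nf G) (nf M)).
Proof.
  intros HG HM; split.
  - intro D; apply (ND_nf_derivable HE Hnf HG D).
    + apply (nf_normal HE Hnf HM).
    + apply (nf_E_eq Hnf).
  - apply (SC_nf_ND HE Hnf HG HM).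
Qed.
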